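(* Fix $\varepsilon\ge0$. If $(\pi_1,\dots,\pi_N,\pi_c)\in\Pi^{N+1}$ satisfies $\max_{(s,a)}|\pi_i(s,a)-\pi_c(s,a)|\le\varepsilon$ for all $i$ (i.e. is feasible for the CAL problem), then there exist $\nu_i\in\mathbb{R}^{|\mathcal{S}|}$ and $\lambda_i\in\mathbb{R}^{|\mathcal{S}||\mathcal{A}|}$, $i=1,\dots,N$, such that $(\{\mu^{\pi_i}_i\}_{i=1}^N,\pi_c,\{\lambda_i\}_{i=1}^N,\{\nu_i\}_{i=1}^N)$ is feasible for the relaxed problem (R). Consequently, the optimal value of (R) is at most the optimal value of the CAL problem, where (R) is: minimize $\sum_{i=1}^N\|\Phi^\top\mu_i-\Phi^\top\mu^{\pi^{E_i}}_i\|_1$ over $\mu_i\in\mathbb{R}^{|\mathcal{S}||\mathcal{A}|}$, $\pi_c$, $\lambda_i\in\mathbb{R}^{|\mathcal{S}||\mathcal{A}|}$, $\nu_i\in\mathbb{R}^{|\mathcal{S}|}$ subject to: $\mu_i\in\mathcal{F}_i$ for all $i$; $\pi_c\in\Pi$; $\lambda_i\ge0$ for all $i$; $\nu_i(s)=\sum_{a\in\mathcal{A}}\mu_i(s,a)$ for all $i,s$; and for all $i$, $s\in\mathcal{S}$, $a\in\mathcal{A}$: $|\mu_i(s,a)-\lambda_i(s,a)|\le\varepsilon\,\nu_i(s)$, $\lambda_i(s,a)\ge\rho(s)\pi_c(s,a)$, $\lambda_i(s,a)\ge\nu_i(s)+\frac{|\mathcal{A}|}{1-\gamma}(\pi_c(s,a)-1)$,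 $\lambda_i(s,a)\le\nu_i(s)+\rho(s)(\pi_c(s,a)-1)$, $\lambda_i(s,a)\le\frac{|\mathcal{A}|}{1-\gamma}\pi_c(s,a)$.
   Context: Let $\mathcal{S},\mathcal{A}$ be finite sets, $\gamma\in(0,1)$, $\rho$ a probability distribution on $\mathcal{S}$, and for $i=1,\dots,N$ environment $i$ is the Markov decision process $(\mathcal{S},\mathcal{A},P^i,\gamma,\rho)$. $\Pi$ is the set of stationary policies $\pi:\mathcal{S}\to\Delta(\mathcal{A})$, $\pi(s,a)$ = probability of action $a$ at state $s$. $\mu^\pi_i(s,a)=\sum_{t\ge0}\gamma^t\mathbb{P}^{\pi,i}_\rho[s_t=s,a_t=a]$ is the discounted occupation measure (trajectory law: $s_0\sim\rho$, $a_t\sim\pi(s_t,\cdot)$, $s_{t+1}\sim P^i(\cdot\mid s_t,a_t)$). Let $P^i$ also denote the $|\mathcal{S}||\mathcal{A}|\times|\mathcal{S}|$ matrix with row $(s,a)$ equal to $P^i(\cdot\mid s,a)$, and $B\in\{0,1\}^{|\mathcal{S}||\mathcal{A}|\times|\mathcal{S}|}$ with $B_{(s_j,a_k),s_l}=1$ iff $j=l$; $\mathcal{F}_i=\{\mu\in\mathbb{R}^{|\mathcal{S}||\mathcal{A}|}_{\ge0}:(B-\gamma P^i)^\top\mu=\rho\}$. Expert policies $\pi^{E_i}\in\Pi$ and a cost basis matrix $\Phi\in\mathbb{R}^{|\mathcal{S}||\mathcal{A}|\times n_c}$ with columns of sup-norm at most $1$ are given. The CAL problem with parameter $\varepsilon\ge0$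 is: minimize $\sum_{i=1}^N\|\Phi^\top\mu^{\pi_i}_i-\Phi^\top\mu^{\pi^{E_i}}_i\|_1$ over $(\pi_1,\dots,\pi_N,\pi_c)\in\Pi^{N+1}$ subject to $\max_{(s,a)}|\pi_i(s,a)-\pi_c(s,a)|\le\varepsilon$ for all $i$. *)

From HB Require Import structures.
From mathcomp Require Import all_boot all_order all_algebra.
From mathcomp Require Import all_classical all_reals all_analysis.
Set Implicit Arguments. Unset Strict Implicit. Unset Printing Implicit Defensive.
Import Order.TTheory GRing.Theory Num.Theory.
Local Open Scope ring_scope.

Section CAL.
Variables (R : realType) (S A : finType).

Definition is_distr (T : finType) (p : T -> R) :=
  (forall x, 0 <= p x) /\ \sum_(x : T) p x = 1.

Definition is_policy (pi : S -> A -> R) := forall s, is_distr (pi s).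

(* transition kernel P(s' | s, a) = P s a s' *)
Definition is_kernel (P : S -> A -> S -> R) := forall s a, is_distr (P s a).

(* law of s_t under the trajectory s_0 ~ rho, a_t ~ pi(s_t,.),
   s_{t+1} ~ P(.|s_t,a_t) *)
Fixpoint state_law (P : S -> A -> S -> R) (pi : S -> A -> R) (rho : S -> R)
    (t : nat) : S -> R :=
  match t with
  | 0 => rho
  | t'.+1 => fun s' =>
      \sum_(s : S) \sum_(a : A) state_law P pi rho t' s * pi s a * P s a s'
  end.

Definition sa_law P pi rho t (s : S) (a : A) :=
  state_law P pi rho t s * pi s a.

Definition occ (gamma : R) P pi rho (s : S) (a : A) : R :=
  limn (fun n => \sum_(0 <= t < n) gamma ^+ t * sa_law P pi rho t s a).

Definition Bmat (s : S) (a : A) (s' : S) : R := (s == s')%:R.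

Definition in_F (gamma : R) (P : S -> A -> S -> R) (rho : S -> R)
    (mu : S -> A -> R) :=
  (forall s a, 0 <= mu s a) /\
  forall s', \sum_(s : S) \sum_(a : A) (Bmat s a s' - gamma * P s a s') * mu s a
             = rho s'.

Definition featmap (nc : nat) (Phi : S -> A -> 'I_nc -> R) (mu : S -> A -> R)
    (k : 'I_nc) : R :=
  \sum_(s : S) \sum_(a : A) Phi s a k * mu s a.

Definition feat_dist nc (Phi : S -> A -> 'I_nc -> R) (mu mu' : S -> A -> R) : R :=
  \sum_(k < nc) `|featmap Phi mu k - featmap Phi mu' k|.

Definition CAL_feasible (N : nat) (eps : R)
    (pis : 'I_N -> S -> A -> R) (pic : S -> A -> R) :=
  (forall i, is_policy (pis i)) /\ is_policy pic /\
  forall i s a, `|pis i s a - pic s a| <= eps.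

Definition CAL_obj (N nc : nat) (gamma : R) (P : 'I_N -> S -> A -> S -> R)
    (rho : S -> R) (Phi : S -> A -> 'I_nc -> R) (piE : 'I_N -> S -> A -> R)
    (pis : 'I_N -> S -> A -> R) : R :=
  \sum_(i < N) feat_dist Phi (occ gamma (P i) (pis i) rho)
                             (occ gamma (P i) (piE i) rho).

Definition R_feasible (N : nat) (eps gamma : R) (P : 'I_N -> S -> A -> S -> R)
    (rho : S -> R) (mus : 'I_N -> S -> A -> R) (pic : S -> A -> R)
    (lams : 'I_N -> S -> A -> R) (nus : 'I_N -> S -> R) :=
  (forall i, in_F gamma (P i) rho (mus i)) /\
  is_policy pic /\
  (forall i s a, 0 <= lams i s a) /\
  (forall i s, nus i s = \sum_(a : A) mus i s a) /\
  (forall i s a,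
     [/\ `|mus i s a - lams i s a| <= eps * nus i s,
         lams i s a >= rho s * pic s a,
         lams i s a >= nus i s + (#|A|%:R / (1 - gamma)) * (pic s a - 1),
         lams i s a <= nus i s + rho s * (pic s a - 1) &
         lams i s a <= (#|A|%:R / (1 - gamma)) * pic s a]).

Definition R_obj (N nc : nat) (gamma : R) (P : 'I_N -> S -> A -> S -> R)
    (rho : S -> R) (Phi : S -> A -> 'I_nc -> R) (piE : 'I_N -> S -> A -> R)
    (mus : 'I_N -> S -> A -> R) : R :=
  \sum_(i < N) feat_dist Phi (mus i) (occ gamma (P i) (piE i) rho).

Definition CAL_value N nc (eps gamma : R) P rho Phi piE : \bar R :=
  ereal_inf [set (@CAL_obj N nc gamma P rho Phi piE x.1)%:E
            | x in [set x | CAL_feasible eps x.1 x.2]].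

Definition R_value N nc (eps gamma : R) P rho Phi piE : \bar R :=
  ereal_inf [set (@R_obj N nc gamma P rho Phi piE x.1.1.1)%:E
            | x in [set x | R_feasible eps gamma P rho x.1.1.1 x.1.1.2 x.1.2 x.2]].

End CAL.

(** The occupation measure factors as [mu_i(s,a) = nu_i(s) pi_i(s,a)], where
    the discounted state occupation [nu_i] satisfies the flow equation and
    [rho <= nu_i <= 1/(1-gamma)].  With [lambda_i := nu_i pi_c] one gets
    [|mu_i - lambda_i| = nu_i |pi_i - pi_c| <= eps nu_i], and the four remaining
    bounds on [lambda_i] are the McCormick envelope of the bilinear term
    [nu_i pi_c] over the box [rho <= nu_i <= |A|/(1-gamma)], [0 <= pi_c <= 1].
    So every CAL-feasible point maps to an (R)-feasible point with the same
    objective. *)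
From HB Require Import structures.
From mathcomp Require Import all_boot all_order all_algebra.
From mathcomp Require Import all_classical all_reals all_analysis.
From mathcomp Require Import ring lra.
Import Order.TTheory GRing.Theory Num.Theory.
Import numFieldNormedType.Exports.
Local Open Scope ring_scope.
Local Open Scope classical_set_scope.

Lemma is_distr_le1 {R : realType} {T : finType} {p : T -> R} :
  is_distr p -> forall x, p x <= 1.
Proof.
by case=> p_ge0 <- x; rewrite (bigD1 x) //= lerDl sumr_ge0.
Qed.

Lemma mccormick_envelope {R : realDomainType} {x y lo hi : R} :
  lo <= x <= hi -> 0 <= y <= 1 ->
  [/\ lo * y <= x * y, x + hi * (y - 1) <= x * y,
      x * y <= x + lo * (y - 1) & x * y <= hi * y].
Proof. by move=> /andP[? ?] /andP[? ?]; split; nra. Qed.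

Lemma sum_Bmat {R : realType} {S A : finType} (mu : S -> A -> R) s' :
  \sum_s \sum_a Bmat R s a s' * mu s a = \sum_a mu s' a.
Proof.
rewrite (bigD1 s') //= [X in _ + X]big1 ?addr0 => [|s ne_ss'].
  by apply: eq_bigr => a _; rewrite /Bmat eqxx mul1r.
by apply: big1 => a _; rewrite /Bmat (negbTE ne_ss') mul0r.
Qed.

Section OccupationMeasure.
Variables (R : realType) (S A : finType) (gamma : R).
Variables (P : S -> A -> S -> R) (pi : S -> A -> R) (rho : S -> R).
Hypotheses (gamma_gt0 : 0 < gamma) (gamma_lt1 : gamma < 1).
Hypotheses (P_kernel : is_kernel P) (pi_policy : is_policy pi).
Hypothesis rho_distr : is_distr rho.

Lemma state_law_distr t : is_distr (state_law P pi rho t).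
Proof.
elim: t => [|t [law_ge0 law_sum1]] //=; split=> [s'|].
  apply: sumr_ge0 => s _; apply: sumr_ge0 => a _.
  by rewrite !mulr_ge0 // ?(pi_policy s).1 ?(P_kernel s a).1.
rewrite exchange_big /= -law_sum1; apply: eq_bigr => s _.
rewrite exchange_big /= -[RHS]mulr1 -(pi_policy s).2 mulr_sumr.
by apply: eq_bigr => a _; rewrite -mulr_sumr (P_kernel s a).2 mulr1.
Qed.

Definition state_occ_partial (s : S) (n : nat) : R :=
  \sum_(0 <= t < n) gamma ^+ t * state_law P pi rho t s.

Definition state_occ (s : S) : R := limn (state_occ_partial s).

Lemma state_occ_partial_nondecreasing s :
  nondecreasing_seq (state_occ_partial s).
Proof.
move=> n m le_nm; rewrite /state_occ_partial (big_cat_nat (leq0n n) le_nm) /=.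
rewrite lerDl sumr_ge0 // => t _.
by rewrite mulr_ge0 ?exprn_ge0 ?(ltW gamma_gt0) ?(state_law_distr t).1.
Qed.

Lemma state_occ_partial_le s n : state_occ_partial s n <= (1 - gamma)^-1.
Proof.
rewrite -[_^-1]mul1r.
apply: le_trans (geometric_le_lim n ler01 gamma_gt0 _); last first.
  by rewrite ger0_norm ?ltW.
apply: ler_sum => t _; rewrite /geometric /= mul1r.
by rewrite ler_piMr ?exprn_ge0 ?(ltW gamma_gt0) ?(is_distr_le1 (state_law_distr t)).
Qed.

Lemma cvg_state_occ s : state_occ_partial s n @[n --> \oo] --> state_occ s.
Proof.
apply: nondecreasing_is_cvgn; first exact: state_occ_partial_nondecreasing.
by exists (1 - gamma)^-1 => _ [n _ <-]; exact: state_occ_partial_le.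
Qed.

Lemma state_occ_ge s : rho s <= state_occ s.
Proof.
have := nondecreasing_cvgn_le (@state_occ_partial_nondecreasing s)
  (cvgP _ (cvg_state_occ s)) 1.
by rewrite /state_occ_partial big_nat1 expr0 mul1r.
Qed.

Lemma state_occ_le s : state_occ s <= (1 - gamma)^-1.
Proof.
apply: limr_le; first exact: cvgP (cvg_state_occ s).
exact/nearW/state_occ_partial_le.
Qed.

Lemma occE s a : occ gamma P pi rho s a = state_occ s * pi s a.
Proof.
apply: cvg_lim => //; under eq_cvg => n.
  rewrite (_ : \sum_(0 <= t < n) _ = state_occ_partial s n * pi s a); first over.
  by rewrite mulr_suml; apply: eq_bigr => t _; rewrite /sa_law mulrA.
by apply: cvgMl; exact: cvg_state_occ.
Qed.

Lemma sum_occ s : \sum_a occ gamma P pi rho s a = state_occ s.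
Proof.
under eq_bigr => a _ do rewrite occE.
by rewrite -mulr_sumr (pi_policy s).2 mulr1.
Qed.

Lemma state_occ_partialS s' n :
  state_occ_partial s' n.+1 =
  rho s' + gamma * \sum_s \sum_a P s a s' * pi s a * state_occ_partial s n.
Proof.
rewrite /state_occ_partial big_nat_recl //= expr0 mul1r; congr (_ + _).
under eq_bigr => t _ do rewrite exprS -mulrA mulr_sumr.
rewrite -mulr_sumr exchange_big /=; congr (_ * _); apply: eq_bigr => s _.
under eq_bigr => t _ do rewrite mulr_sumr.
rewrite exchange_big /=; apply: eq_bigr => a _.
by rewrite mulr_sumr; apply: eq_bigr => t _; ring.
Qed.

Lemma state_occ_flow s' :
  state_occ s' = rho s' + gamma * \sum_s \sum_a P s a s' * pi s a * state_occ s.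
Proof.
apply: (cvg_unique _ (cvg_state_occ s')) => //=.
rewrite -cvg_shiftS /=; under eq_cvg => n do rewrite state_occ_partialS.
apply: cvgD; first exact: cvg_cst.
apply: cvgMr; apply: cvg_big => [|s _]; first exact: add_continuous.
apply: cvg_big => [|a _]; first exact: add_continuous.
apply: cvgM; [exact: cvg_cst | exact: cvg_state_occ].
Qed.

Lemma occ_in_F : in_F gamma P rho (occ gamma P pi rho).
Proof.
split=> [s a|s'].
  rewrite occE mulr_ge0 ?(pi_policy s).1 //.
  exact: le_trans (rho_distr.1 s) (state_occ_ge s).
have flow_term : \sum_s \sum_a gamma * P s a s' * occ gamma P pi rho s a =
                  gamma * \sum_s \sum_a P s a s' * pi s a * state_occ s.
  rewrite mulr_sumr; apply: eq_bigr => s _; rewrite mulr_sumr.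
  by apply: eq_bigr => a _; rewrite occE; ring.
under eq_bigr => s _ do rewrite (eq_bigr _ (fun a _ => mulrBl _ _ _)) sumrB.
by rewrite sumrB sum_Bmat sum_occ flow_term state_occ_flow addrK.
Qed.

End OccupationMeasure.

Arguments state_occ {R S A}.

Lemma CAL_feasible_relaxed (R : realType) (S A : finType) (N : nat)
    (gamma eps : R) (rho : S -> R) (P : 'I_N -> S -> A -> S -> R)
    (pis : 'I_N -> S -> A -> R) (pic : S -> A -> R) :
  0 < gamma < 1 -> is_distr rho -> (forall i, is_kernel (P i)) ->
  CAL_feasible eps pis pic ->
  let nus i := state_occ gamma (P i) (pis i) rho in
  R_feasible eps gamma P rho (fun i => occ gamma (P i) (pis i) rho) pic
    (fun i s a => nus i s * pic s a) nus.
Proof.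
move=> /andP[gamma_gt0 gamma_lt1] rho_distr P_kernel [pis_policy [pic_policy close]] nus.
have nus_ge i s : rho s <= nus i s by exact: state_occ_ge.
have nus_le i s : nus i s <= (1 - gamma)^-1 by exact: state_occ_le.
have nus_ge0 i s : 0 <= nus i s := le_trans (rho_distr.1 s) (nus_ge i s).
split=> [i|]; first exact: occ_in_F.
split=> //; split=> [i s a|]; first by rewrite mulr_ge0 ?(pic_policy s).1.
split=> [i s|i s a]; first by rewrite sum_occ.
have le_inv_K : (1 - gamma)^-1 <= #|A|%:R / (1 - gamma).
  rewrite ler_peMl ?invr_ge0 ?subr_ge0 ?(ltW gamma_lt1) // ler1n.
  by apply/card_gt0P; exists a.
have nus_bounds : rho s <= nus i s <= #|A|%:R / (1 - gamma).
  by rewrite nus_ge (le_trans (nus_le i s)).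
have pic_bounds : 0 <= pic s a <= 1.
  by rewrite (pic_policy s).1 (is_distr_le1 (pic_policy s)).
have [? ? ? ?] := mccormick_envelope nus_bounds pic_bounds.
have occ_eq : occ gamma (P i) (pis i) rho s a = nus i s * pis i s a.
  exact: occE.
by split=> //; rewrite occ_eq -mulrBr normrM ger0_norm // mulrC ler_wpM2r.
Qed.

Theorem proposition4 (R : realType) (S A : finType) (N nc : nat)
    (gamma : R) (rho : S -> R) (P : 'I_N -> S -> A -> S -> R)
    (piE : 'I_N -> S -> A -> R) (Phi : S -> A -> 'I_nc -> R) (eps : R) :
  0 < gamma < 1 ->
  is_distr rho ->
  (forall i, is_kernel (P i)) ->
  (forall i, is_policy (piE i)) ->
  (forall s a k, `|Phi s a k| <= 1) ->
  0 <= eps ->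
  (forall (pis : 'I_N -> S -> A -> R) (pic : S -> A -> R),
     CAL_feasible eps pis pic ->
     exists (nus : 'I_N -> S -> R) (lams : 'I_N -> S -> A -> R),
       R_feasible eps gamma P rho
         (fun i => occ gamma (P i) (pis i) rho) pic lams nus)
  /\
  (R_value eps gamma P rho Phi piE <= CAL_value eps gamma P rho Phi piE)%E.
Proof.
move=> gamma01 rho_distr P_kernel _ _ _.
have relaxed pis pic : CAL_feasible eps pis pic ->
    exists nus lams, R_feasible eps gamma P rho
      (fun i => occ gamma (P i) (pis i) rho) pic lams nus.
  by move=> feas; do 2 eexists; exact: CAL_feasible_relaxed feas.
split=> //; apply: le_ereal_inf => _ [[pis pic] /relaxed [nus [lams feas]] <-].
by exists ((fun i => occ gamma (P i) (pis i) rho, pic, lams), nus).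
Qed.
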